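(* Let $P$ be a positive, completely labelled causal logic program, $p$ an atom, $k\in\{1,2,\dots\}\cup\{\omega\}$ and $G$ a causal graph. If $G$ is a $\le$-maximal element of $T_P\!\uparrow\!k(p)$ and $\mathrm{height}(G)=h\le k$, then $G\in T_P\!\uparrow\!h(p)$.
   Context: Causal graphs: reflexively–transitively closed directed graphs on labels; $G\le G'$ iff $G\supseteq G'$; $G*G'=(G\cup G')^*$, $G\cdot G'$ the closure of the graph with vertices $V\cup V'$ and edges $E\cup E'\cup(V\times V')$. Causal values: down-sets of causal graphs; $*$ intersection, $+$ union, $U\cdot U'={\downarrow}\{G\cdot G'\}$; a label $l$ denotes ${\downarrow}$ of the graph with only edge $(l,l)$, $1$ all causal graphs, $0=\emptyset$. Rules $t:H\leftarrow B_1,\dots,B_n$; positive = no default negation; completely labelled = every rule has a label and labels are pairwise distinct. $T_P(I)(p)=\sum\{(I(B_1)*\dots*I(B_n))\cdot t\mid(t:p\leftarrow B_1,\dots,B_n)\in P\}$, $T_P\!\uparrow\!0=$ all atoms $0$, $T_P\!\uparrow\!(k+1)=T_P(T_P\!\uparrow\!k)$, $T_P\!\uparrow\!\omega(p)=\sum_{k<\omega}T_P\!\uparrow\!k(p)$. $\mathrm{height}(G)$ is the maximal number of vertices of a simple directed path (no repeated vertices) in $G$; a single-vertex graph has height $1$. *)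

From Stdlib Require Import List Relations Arith.
Import ListNotations.
Set Implicit Arguments.

Section Causal.
Variable L : Type.

(* an edge relation on labels; a causal graph is identified with its edge set *)
Definition graph := L -> L -> Prop.

Definition endpoint (R : graph) (x : L) : Prop := exists y, R x y \/ R y x.

Definition clos (R : graph) : graph :=
  fun x y => (x = y /\ endpoint R x) \/ clos_trans L R x y.

Definition is_cgraph (G : graph) : Prop :=
  (forall x y, G x y -> G x x /\ G y y) /\
  (forall x y z, G x y -> G y z -> G x z).

(* G <= G'  iff  G is a superset of G' *)
Definition gle (G G' : graph) : Prop := forall x y, G' x y -> G x y.

Definition gprod (G G' : graph) : graph := clos (fun x y => G x y \/ G' x y).

Definition gapp (G G' : graph) : graph :=
  clos (fun x y => G x y \/ G' x y \/ (endpoint G x /\ endpoint G' y)).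

(* causal values: down-sets of causal graphs, represented as predicates *)
Definition cvalue := graph -> Prop.

Definition downset (S : graph -> Prop) : cvalue :=
  fun G => is_cgraph G /\ exists G', S G' /\ gle G G'.

Definition vone : cvalue := is_cgraph.
Definition vzero : cvalue := fun _ => False.
Definition vprod (U U' : cvalue) : cvalue := fun G => U G /\ U' G.
Definition vapp (U U' : cvalue) : cvalue :=
  downset (fun G => exists G1 G2, U G1 /\ U' G2 /\
                      forall x y, G x y <-> gapp G1 G2 x y).
Definition vlabel (l : L) : cvalue :=
  downset (fun G => forall x y, G x y <-> (x = l /\ y = l)).

Definition maximal_in (U : cvalue) (G : graph) : Prop :=
  U G /\ forall G', U G' -> gle G G' -> gle G' G.

Fixpoint path_edges (G : graph) (s : list L) : Prop :=
  match s with
  | x :: ((y :: _) as t) => G x y /\ path_edges G t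
  | _ => True
  end.

Definition simple_path (G : graph) (s : list L) : Prop :=
  NoDup s /\ Forall (fun x => G x x) s /\ path_edges G s.

Definition has_height (G : graph) (h : nat) : Prop :=
  (exists s, simple_path G s /\ length s = h) /\
  (forall s, simple_path G s -> length s <= h).

End Causal.

Section Programs.
Variables L A : Type.

Record rule := mkRule { rlabel : L; rhead : A; rbody : list A }.

Definition program := rule -> Prop.

(* labels pairwise distinct (every rule carries a label by construction) *)
Definition completely_labelled (P : program) : Prop :=
  forall r r', P r -> P r' -> rlabel r = rlabel r' -> r = r'.

Definition interp := A -> cvalue L.

Definition body_val (I : interp) (b : list A) : cvalue L :=
  fold_right (fun a U => vprod (I a) U) (@vone L) b.

Definition TP (P : program) (I : interp) : interp :=
  fun p G => exists r, P r /\ rhead r = p /\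
               vapp (body_val I (rbody r)) (vlabel (rlabel r)) G.

Fixpoint TPup (P : program) (n : nat) : interp :=
  match n with
  | 0 => fun _ => @vzero L
  | S m => TP P (TPup P m)
  end.

Definition TPomega (P : program) : interp :=
  fun p G => exists n, TPup P n p G.

End Programs.

Inductive ext_nat := Fin (n : nat) | Omega.

Definition valid_k (k : ext_nat) : Prop :=
  match k with Fin n => 1 <= n | Omega => True end.

Definition le_ext (h : nat) (k : ext_nat) : Prop :=
  match k with Fin n => h <= n | Omega => True end.

Definition TPup_ext {L A : Type} (P : program L A) (k : ext_nat) : interp L A :=
  match k with Fin n => TPup P n | Omega => TPomega P end.

(* Induct on the height bound h and, inside it, on the stage n at which the
   graph G appears.  Let r be the last rule used, with label l; l is a top
   vertex of G.  If every body atom of r holds, at some stage, for the part of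
   G strictly below l, that part has height < h, so by induction it appears at
   stage h - 1 and G appears at stage h.  Otherwise some body atom can only be
   derived for the graph below l by a derivation that uses the label l, i.e.
   (labels being distinct) the rule r itself; this exhibits G at an earlier
   stage. *)

From Stdlib Require Import List Relations Classical Lia Wf_nat Permutation.
Import ListNotations.

Section Graphs.
Context {L : Type}.

Definition restrict_below (G : graph L) (l : L) : graph L :=
  fun x y => G x y /\ G x l /\ G y l.

Definition delete_vertex (G : graph L) (l : L) : graph L :=
  fun x y => G x y /\ x <> l /\ y <> l.

Definition height_le (G : graph L) (h : nat) : Prop :=
  forall s, simple_path G s -> length s <= h.

Lemma cgraph_restrict_below G l : is_cgraph G -> is_cgraph (restrict_below G l).
Proof.
  intros [refl trans]; split.
  - intros x y [Gxy [Gxl Gyl]]. destruct (refl _ _ Gxy). unfold restrict_below; tauto.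
  - intros x y z [Gxy [Gxl _]] [Gyz [_ Gzl]]. repeat split; eauto.
Qed.

Lemma cgraph_delete_vertex G l : is_cgraph G -> is_cgraph (delete_vertex G l).
Proof.
  intros [refl trans]; split.
  - intros x y [Gxy [xl yl]]. destruct (refl _ _ Gxy). unfold delete_vertex; tauto.
  - intros x y z [Gxy [xl _]] [Gyz [_ zl]]. repeat split; eauto.
Qed.

Lemma gle_restrict_below G l : gle G (restrict_below G l).
Proof. intros x y Hxy; apply Hxy. Qed.

Lemma gle_delete_vertex G l : gle G (delete_vertex G l).
Proof. intros x y Hxy; apply Hxy. Qed.

Lemma path_edges_sub (G H : graph L) s :
  gle H G -> path_edges G s -> path_edges H s.
Proof.
  intros GH. induction s as [|x s IH]; simpl; auto.
  destruct s as [|y s]; auto. intros [Gxy Hs]; split; auto.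
Qed.

Lemma path_edges_snoc (G : graph L) l s :
  (forall x, In x s -> G x l) -> path_edges G s -> path_edges G (s ++ [l]).
Proof.
  induction s as [|x s IH]; simpl; intros Htop Hs; auto.
  destruct s as [|y s]; simpl; [split; auto|].
  destruct Hs as [Gxy Hs]. split; auto. apply IH; auto.
Qed.

Lemma height_le_gle (G H : graph L) h : gle G H -> height_le G h -> height_le H h.
Proof.
  intros GH Hh s [nd [vs es]]. apply Hh. repeat split; auto.
  - rewrite Forall_forall in *. intros x Hx; apply GH, vs, Hx.
  - eapply path_edges_sub; eauto.
Qed.

Lemma height_le_0 (G : graph L) x : height_le G 0 -> ~ G x x.
Proof.
  intros Hh Gxx. enough (length [x] <= 0) by (simpl in *; lia).
  apply Hh. repeat split; simpl; auto. constructor; [intros []|constructor].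
Qed.

(* Every simple path below l avoiding l extends by l. *)
Lemma height_le_below_top (G : graph L) h l :
  G l l -> height_le G (S h) -> height_le (delete_vertex (restrict_below G l) l) h.
Proof.
  intros Gll Hh s [nd [vs es]]. rewrite Forall_forall in vs.
  enough (length (s ++ [l]) <= S h) by (rewrite length_app in *; simpl in *; lia).
  apply Hh. repeat split.
  - apply Permutation_NoDup with (l :: s); [apply Permutation_cons_append|].
    constructor; auto. intros Hl. apply (vs l Hl); reflexivity.
  - apply Forall_app; split; [apply Forall_forall; intros x Hx; apply vs, Hx|auto].
  - apply path_edges_snoc; [intros x Hx; apply (vs x Hx)|].
    eapply path_edges_sub; [|eauto]. intros x y Hxy; apply Hxy.
Qed.

End Graphs.

Section Stages.
Variables L A : Type.
Variable P : program L A.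

Lemma body_valE (I : interp L A) bs G :
  body_val I bs G <-> (forall b, In b bs -> I b G) /\ is_cgraph G.
Proof.
  induction bs as [|a bs IH]; simpl.
  - split; [intros; split; [intros _ []|auto]|tauto].
  - unfold vprod. rewrite IH. split.
    + intros [Ia [Ibs cg]]. split; auto. intros b [<-|Hb]; auto.
    + intros [Ib cg]. auto.
Qed.

Lemma TPup_gle n a (G H : graph L) :
  TPup P n a H -> is_cgraph G -> gle G H -> TPup P n a G.
Proof.
  destruct n; simpl; [contradiction|].
  intros [r [Pr [hd [_ [G' [HG' HG'le]]]]]] cg GH.
  exists r. do 3 (split; auto). exists G'. split; auto.
  intros x y Hxy. apply GH, HG'le, Hxy.
Qed.

(* [vapp] puts every vertex of the body graph below the rule label, so the
   body holds of the part of G below that label. *)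
Lemma TPup_S_inv n a (G : graph L) :
  TPup P (S n) a G -> is_cgraph G /\ exists r, P r /\ rhead r = a /\
    G (rlabel r) (rlabel r) /\
    forall b, In b (rbody r) -> TPup P n b (restrict_below G (rlabel r)).
Proof.
  simpl. intros [r [Pr [hd [cg [G' [[G1 [G2 [HB [HL HG']]]] GG']]]]]].
  split; auto. exists r. split; [exact Pr|]. split; [exact hd|].
  set (l := rlabel r) in *.
  destruct HL as [_ [G3 [HG3 G2G3]]].
  assert (G2l : G2 l l) by (apply G2G3, HG3; auto).
  assert (Hedge : forall x y, G1 x y \/ G2 x y \/ (endpoint G1 x /\ endpoint G2 y) -> G x y)
    by (intros x y Hxy; apply GG', HG'; right; apply t_step, Hxy).
  split; [apply Hedge; auto|].
  apply body_valE in HB as [HB cg1].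
  intros b Hb. apply TPup_gle with G1; auto; [apply cgraph_restrict_below; auto|].
  intros x y Hxy. repeat split; apply Hedge; auto; right; right; split;
    solve [exists y; auto | exists x; auto | exists l; auto].
Qed.

Lemma TPup_S_intro n (G : graph L) r :
  is_cgraph G -> P r -> G (rlabel r) (rlabel r) ->
  (forall b, In b (rbody r) -> TPup P n b (restrict_below G (rlabel r))) ->
  TPup P (S n) (rhead r) G.
Proof.
  intros cg Pr Gll Hb. simpl. exists r.
  split; [exact Pr|]. split; [reflexivity|]. split; [exact cg|].
  set (l := rlabel r) in *.
  set (Gl := fun x y : L => x = l /\ y = l).
  exists (gapp (restrict_below G l) Gl). split.
  - exists (restrict_below G l), Gl. split; [|split; [|tauto]].
    + apply body_valE. split; auto. apply cgraph_restrict_below; auto.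
    + split; [split|].
      * intros x y [-> ->]; split; split; reflexivity.
      * intros x y z [-> _] [_ ->]; split; reflexivity.
      * exists Gl. split; [intros; unfold Gl; tauto|intros x y Hxy; exact Hxy].
  - destruct cg as [refl trans].
    assert (Hedge : forall x y, restrict_below G l x y \/ Gl x y \/
        (endpoint (restrict_below G l) x /\ endpoint Gl y) -> G x y).
    { intros x y [Hxy|[[-> ->]|[[w Hw] [w' Hw']]]]; [apply Hxy|exact Gll|].
      assert (y = l) as -> by (destruct Hw' as [[? ?]|[? ?]]; auto).
      destruct Hw as [[? [? ?]]|[? [? ?]]]; auto. }
    intros x y [[<- [z [Hz|Hz]]]|Hxy].
    + apply (refl _ _ (Hedge _ _ Hz)).
    + apply (refl _ _ (Hedge _ _ Hz)).
    + induction Hxy; eauto.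
Qed.

Lemma TPup_succ n a G : TPup P n a G -> TPup P (S n) a G.
Proof.
  revert a G. induction n as [|n IH]; intros a G HG; [contradiction|].
  apply TPup_S_inv in HG as [cg [r [Pr [<- [Gll Hb]]]]].
  apply TPup_S_intro; auto.
Qed.

Lemma TPup_monotone n m a G : n <= m -> TPup P n a G -> TPup P m a G.
Proof. induction 1; auto using TPup_succ. Qed.

Lemma TPup_common_stage (bs : list A) (G : graph L) :
  (forall b, In b bs -> exists k, TPup P k b G) ->
  exists K, forall b, In b bs -> TPup P K b G.
Proof.
  induction bs as [|a bs IH]; intros Hbs; [exists 0; intros b []|].
  destruct (Hbs a (or_introl eq_refl)) as [k Hk].
  destruct IH as [K HK]; [intros b Hb; apply Hbs; right; auto|].
  exists (max k K). intros b [<-|Hb].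
  - apply TPup_monotone with k; [lia|exact Hk].
  - apply TPup_monotone with K; [lia|auto].
Qed.

Hypothesis labels_distinct : completely_labelled P.

Lemma TPup_avoid_label_or_reuse r : P r ->
  forall n b H, TPup P n b H ->
  (exists k, TPup P k b (delete_vertex H (rlabel r))) \/
  (exists m, m <= n /\ TPup P m (rhead r) H).
Proof.
  intros Pr. induction n as [|n IH]; intros b H HH; [contradiction|].
  pose proof (TPup_S_inv _ _ _ HH) as [cg [r' [Pr' [hd [Hll Hb]]]]].
  destruct (classic (rlabel r' = rlabel r)) as [e|ne].
  { right. exists (S n). split; auto.
    replace r with r' by (apply labels_distinct; auto). subst; exact HH. }
  set (Hr := delete_vertex (restrict_below H (rlabel r')) (rlabel r)).
  destruct (classic (exists c, In c (rbody r') /\ ~ exists k, TPup P k c Hr))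
    as [[c [Hc Hnot]]|Havoid].
  - destruct (IH c _ (Hb c Hc)) as [Hk|[m [Hm Hm2]]]; [contradiction|].
    right. exists m. split; [lia|].
    apply TPup_gle with (restrict_below H (rlabel r')); auto using gle_restrict_below.
  - left. destruct (TPup_common_stage (rbody r') Hr) as [K HK].
    { intros c Hc. apply NNPP; intro; apply Havoid; eauto. }
    exists (S K). subst b. apply TPup_S_intro.
    + apply cgraph_delete_vertex; auto.
    + exact Pr'.
    + unfold delete_vertex; auto.
    + intros c Hc. apply TPup_gle with Hr; auto.
      * apply cgraph_restrict_below, cgraph_delete_vertex; auto.
      * intros x y Hxy. unfold Hr, delete_vertex, restrict_below in *; tauto.
Qed.

Lemma TPup_height h : forall (G : graph L), is_cgraph G -> height_le G h ->
  forall n a, TPup P n a G -> TPup P h a G.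
Proof.
  induction h as [|h IHh]; intros G cg Hh n a HG.
  { destruct n; [contradiction|].
    apply TPup_S_inv in HG as [_ [r [_ [_ [Gll _]]]]].
    exfalso; eapply height_le_0; eauto. }
  revert G cg Hh a HG. induction n as [n IHn] using lt_wf_ind. intros G cg Hh a HG.
  destruct n; [contradiction|].
  pose proof (TPup_S_inv _ _ _ HG) as [_ [r [Pr [<- [Gll Hb]]]]].
  set (Gl := restrict_below G (rlabel r)).
  destruct (classic (exists b, In b (rbody r) /\
      ~ exists k, TPup P k b (delete_vertex Gl (rlabel r)))) as [[b [Hin Hnot]]|Havoid].
  - destruct (TPup_avoid_label_or_reuse r Pr _ _ _ (Hb b Hin)) as [Hk|[m [Hm Hm2]]];
      [contradiction|].
    apply TPup_gle with Gl; [|exact cg|apply gle_restrict_below].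
    apply IHn with m; [lia|apply cgraph_restrict_below; auto| |exact Hm2].
    apply height_le_gle with G; [apply gle_restrict_below|exact Hh].
  - apply TPup_S_intro; auto. intros b Hin.
    destruct (NNPP (exists k, TPup P k b (delete_vertex Gl (rlabel r)))) as [k Hk].
    { intro; apply Havoid; eauto. }
    apply TPup_gle with (delete_vertex Gl (rlabel r)); auto using gle_delete_vertex.
    + eapply IHh; eauto using height_le_below_top.
      apply cgraph_delete_vertex, cgraph_restrict_below; auto.
    + apply cgraph_restrict_below; auto.
Qed.

End Stages.

Theorem mainTheorem18 (L A : Type) (P : program L A) (p : A) (k : ext_nat)
  (G : graph L) (h : nat) :
  completely_labelled P ->
  valid_k k ->
  is_cgraph G ->
  maximal_in (TPup_ext P k p) G ->
  has_height G h ->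
  le_ext h k ->
  TPup P h p G.
Proof.
  intros labels_distinct _ cg [HG _] [_ Hh] _.
  destruct k as [n|]; simpl in HG; [|destruct HG as [n HG]];
    eapply TPup_height; eauto.
Qed.
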